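(* Let $\mathbb{F}_q$ be a finite field. For any sets $\mathcal{A},\mathcal{B},\mathcal{C}\subseteq\mathbb{F}_q$ with $A=\#\mathcal{A}$ and any nontrivial additive character $\psi$ of $\mathbb{F}_q$, $$|S_\psi(\mathcal{A},\mathcal{B},\mathcal{C})|\le A^{1/2}\,\mathrm{E}(\mathcal{B})^{1/4}\,\mathrm{E}(\mathcal{C})^{1/4}\,q^{1/2}.$$
   Context: $S_\psi(\mathcal{A},\mathcal{B},\mathcal{C})=\sum_{a\in\mathcal{A}}\sum_{b\in\mathcal{B}}\sum_{c\in\mathcal{C}}\psi(ab+ac+bc)$. $\mathrm{E}(\mathcal{U})=\#\{(u_1,u_2,u_3,u_4)\in\mathcal{U}^4:u_1+u_2=u_3+u_4\}$. *)

From HB Require Import structures.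
From mathcomp Require Import all_boot all_order all_algebra all_field.
Set Implicit Arguments. Unset Strict Implicit. Unset Printing Implicit Defensive.
Import Order.TTheory GRing.Theory Num.Theory.
Local Open Scope ring_scope.

(* An additive character of F: a group homomorphism (F,+) -> C^x, with C
   represented by the algebraic complex numbers algC. *)
Definition additive_character (F : finFieldType) (psi : F -> algC) : Prop :=
  (forall x y : F, psi (x + y) = psi x * psi y) /\ (forall x : F, psi x != 0).

Definition nontrivial_character (F : finFieldType) (psi : F -> algC) : Prop :=
  exists x : F, psi x != 1.

Definition S_psi (F : finFieldType) (psi : F -> algC) (A B C : {set F}) : algC :=
  \sum_(a in A) \sum_(b in B) \sum_(c in C) psi (a * b + a * c + b * c).

Definition energy (F : finFieldType) (U : {set F}) : nat :=
  #|[set u : F * F * F * F |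
      [&& u.1.1.1 \in U, u.1.1.2 \in U, u.1.2 \in U, u.2 \in U &
          u.1.1.1 + u.1.1.2 == u.1.2 + u.2]]|.

From HB Require Import structures.
From mathcomp Require Import all_boot all_order all_algebra all_field.
From mathcomp Require Import ring zify.
Import Order.TTheory GRing.Theory Num.Theory.
Set Implicit Arguments. Unset Strict Implicit.
Local Open Scope ring_scope.

(* Write S as the sum over a in A of T(a) = sum_(b in B, c in C) psi(ab + ac + bc).
   By Cauchy-Schwarz |S|^2 <= |A| sum_(a in F) |T(a)|^2.  Expanding |T(a)|^2,
   the exponent differs by a((b + c) - (b' + c')) + (bc - b'c'), so summing over
   all a in F the orthogonality of psi kills every quadruple with b + c != b' + c'
   and leaves at most q E(B, C), where E(B, C) counts the solutions of
   b + c = b' + c'.  Finally E(B, C) = sum_x r_B(x) r_C(x), with r_U(x) the number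
   of ways to write x = u1 - u2, and E(U) = E(U, U), so a second Cauchy-Schwarz
   gives E(B, C)^2 <= E(B) E(C); the theorem is the fourth root of
   |S|^4 <= |A|^2 q^2 E(B) E(C). *)

Lemma CauchySchwarz_sum (R : numDomainType) (I : finType) (P : pred I)
    (u v : I -> R) :
  (forall i, u i \is Num.real) -> (forall i, v i \is Num.real) ->
  (\sum_(i | P i) u i * v i) ^+ 2 <=
    (\sum_(i | P i) u i ^+ 2) * (\sum_(i | P i) v i ^+ 2).
Proof.
move=> Ru Rv.
have sum_mul_sum (f g : I -> R) : (\sum_(i | P i) f i) * (\sum_(j | P j) g j)
    = \sum_(i | P i) \sum_(j | P j) f i * g j.
  by rewrite mulr_suml; apply: eq_bigr => i _; rewrite mulr_sumr.
rewrite expr2 !sum_mul_sum -(@ler_pM2l _ 2) ?ltr0n //.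
have -> : 2 * (\sum_(i | P i) \sum_(j | P j) u i ^+ 2 * v j ^+ 2) =
    \sum_(i | P i) \sum_(j | P j) ((u i * v j) ^+ 2 + (u j * v i) ^+ 2).
  rewrite mulr_natl mulr2n [X in _ + X = _]exchange_big -big_split /=.
  by apply: eq_bigr => i _; rewrite -big_split; apply: eq_bigr => j _; rewrite !exprMn.
rewrite mulr_sumr; apply: ler_sum => i _; rewrite mulr_sumr; apply: ler_sum => j _.
have -> : u i * v i * (u j * v j) = (u i * v j) * (u j * v i) by ring.
by rewrite mulrC mulr_natr; apply: (real_leif_mean_square_scaled _ _).1; rewrite rpredM.
Qed.

Section AdditiveCharacter.
Variables (F : finFieldType) (psi : F -> algC).
Hypothesis psi_char : additive_character psi.

Lemma psiD x y : psi (x + y) = psi x * psi y.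
Proof. by case: psi_char. Qed.

Lemma psi_neq0 x : psi x != 0.
Proof. by case: psi_char. Qed.

Lemma psi0 : psi 0 = 1.
Proof. by apply: (mulfI (psi_neq0 0)); rewrite mulr1 -psiD addr0. Qed.

Lemma psiMn x n : psi (x *+ n) = psi x ^+ n.
Proof.
elim: n => [|n IHn]; first by rewrite mulr0n expr0 psi0.
by rewrite mulrS exprS psiD IHn.
Qed.

Lemma norm_psi x : `|psi x| = 1.
Proof.
have [p p_pr pF] := finPcharP F.
have /(congr1 Num.norm)/eqP : psi x ^+ p = 1 by rewrite -psiMn (mulrn_pchar pF) psi0.
by rewrite normrX normr1 pexpr_eq1 ?prime_gt0 // => /eqP.
Qed.

Lemma conj_psi x : (psi x)^* = psi (- x).
Proof.
apply: (mulfI (psi_neq0 x)).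
by rewrite -normCK norm_psi expr1n -psiD subrr psi0.
Qed.

Lemma sum_psi_mul t : nontrivial_character psi ->
  \sum_a psi (a * t) = if t == 0 then #|F|%:R else 0.
Proof.
move=> [x0 psi_x0_neq1]; have [->|t_neq0] := eqVneq t 0.
  by under eq_bigr do rewrite mulr0 psi0; rewrite sumr_const.
suff sum_psi_eq0 : \sum_a psi a = 0.
  by rewrite -[RHS]sum_psi_eq0 [RHS](reindex_inj (mulIf t_neq0)).
have /eqP : psi x0 * \sum_a psi a = \sum_a psi a.
  rewrite mulr_sumr [RHS](reindex_inj (addrI x0)) /=.
  by apply: eq_bigr => a _; rewrite psiD.
rewrite -subr_eq0 -{2}[\sum_a _]mul1r -mulrBl mulf_eq0 subr_eq0.
by rewrite (negPf psi_x0_neq1) => /eqP.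
Qed.

End AdditiveCharacter.

Section AdditiveEnergy.
Variable V : finZmodType.

Definition cross_energy (B C : {set V}) : nat :=
  (\sum_(b in B) \sum_(c in C) \sum_(b' in B) \sum_(c' in C)
     ((b + c)%R == (b' + c')%R))%N.

Definition diff_rep (U : {set V}) (x : V) : nat :=
  (\sum_(u1 in U) \sum_(u2 in U) ((u1 - u2)%R == x))%N.

Lemma sum_eq_mul_eq (T : finType) (a b : T) :
  (\sum_x ((a == x) * (b == x)))%N = (a == b).
Proof.
rewrite (bigD1 a) //= eqxx mul1n big1 ?addn0 1?eq_sym // => x /negPf x_neq_a.
by rewrite eq_sym x_neq_a.
Qed.

Lemma addr_eq_subr (W : zmodType) (a b c d : W) :
  (a + d == b + c) = (a - b == c - d).
Proof. by rewrite subr_eq addrAC [RHS]eq_sym subr_eq eq_sym [c + b]addrC. Qed.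

Lemma cross_energy_diff_rep (B C : {set V}) :
  cross_energy B C = (\sum_x diff_rep B x * diff_rep C x)%N.
Proof.
have expand x : (diff_rep B x * diff_rep C x =
    \sum_(b in B) \sum_(b' in B) \sum_(c' in C) \sum_(c in C)
      (((b - b')%R == x) * ((c' - c)%R == x)))%N.
  rewrite /diff_rep big_distrl; apply: eq_bigr => b _.
  rewrite big_distrl; apply: eq_bigr => b' _.
  by rewrite big_distrr; apply: eq_bigr => c' _; rewrite big_distrr.
under [RHS]eq_bigr do rewrite expand.
rewrite exchange_big; apply: eq_bigr => b _.
rewrite exchange_big [RHS]exchange_big; apply: eq_bigr => b' _.
rewrite exchange_big [RHS]exchange_big; apply: eq_bigr => c' _.
rewrite [RHS]exchange_big; apply: eq_bigr => c _.
by rewrite sum_eq_mul_eq; congr nat_of_bool; apply: addr_eq_subr.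
Qed.

Lemma cross_energy_sqr_le (B C : {set V}) :
  (cross_energy B C ^ 2 <= cross_energy B B * cross_energy C C)%N.
Proof.
rewrite !cross_energy_diff_rep -(@ler_nat int) natrM !natrX !natr_sum.
under eq_bigr do rewrite natrM.
under [X in _ <= X * _]eq_bigr do rewrite natrM -expr2.
under [X in _ <= _ * X]eq_bigr do rewrite natrM -expr2.
by apply: CauchySchwarz_sum => x; apply: realn.
Qed.

End AdditiveEnergy.

Lemma energyE (F : finFieldType) (U : {set F}) : energy U = cross_energy U U.
Proof.
rewrite /energy /cross_energy -sum1_card !pair_big big_mkcond [RHS]big_mkcond.
apply: eq_bigr => -[[[u1 u2] u3] u4] _ /=; rewrite inE /=.
by case: (u1 \in U); case: (u2 \in U); case: (u3 \in U); case: (u4 \in U).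
Qed.

Section CharacterSum.
Variables (F : finFieldType) (psi : F -> algC) (B C : {set F}).
Hypothesis psi_char : additive_character psi.
Hypothesis psi_nontrivial : nontrivial_character psi.

Definition inner_sum (a : F) : algC :=
  \sum_(b in B) \sum_(c in C) psi (a * b + a * c + b * c).

Lemma norm_inner_sum_sqr a : `|inner_sum a| ^+ 2 =
  \sum_(b in B) \sum_(c in C) \sum_(b' in B) \sum_(c' in C)
    psi (b * c - b' * c') * psi (a * ((b + c) - (b' + c'))).
Proof.
rewrite normCK /inner_sum raddf_sum mulr_suml; apply: eq_bigr => b _.
rewrite mulr_suml; apply: eq_bigr => c _.
rewrite mulr_sumr; apply: eq_bigr => b' _.
rewrite raddf_sum mulr_sumr; apply: eq_bigr => c' _.
by rewrite /= conj_psi // -!(psiD psi_char); congr psi; ring.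
Qed.

Lemma sum_norm_inner_sum_sqr_le :
  \sum_a `|inner_sum a| ^+ 2 <= #|F|%:R * (cross_energy B C)%:R.
Proof.
have orthogonality b c b' c' :
    \sum_a psi (b * c - b' * c') * psi (a * ((b + c) - (b' + c'))) =
    psi (b * c - b' * c') * ((b + c == b' + c')%:R * #|F|%:R).
  by rewrite -mulr_sumr sum_psi_mul // subr_eq0; case: (_ == _); rewrite ?mul1r ?mul0r.
rewrite -[leLHS]ger0_norm; last by apply: sumr_ge0 => a _; rewrite exprn_ge0.
under eq_bigr do rewrite norm_inner_sum_sqr.
have -> : \sum_a \sum_(b in B) \sum_(c in C) \sum_(b' in B) \sum_(c' in C)
      psi (b * c - b' * c') * psi (a * ((b + c) - (b' + c'))) =
    \sum_(b in B) \sum_(c in C) \sum_(b' in B) \sum_(c' in C)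
      psi (b * c - b' * c') * ((b + c == b' + c')%:R * #|F|%:R).
  by do 4![rewrite exchange_big; apply: eq_bigr => ? _]; apply: orthogonality.
rewrite /cross_energy.
do 4![rewrite natr_sum mulr_sumr; apply: le_trans (ler_norm_sum _ _ _) (ler_sum _ _) => ? _].
by rewrite normrM norm_psi // mul1r mulrC ger0_norm ?mulr_ge0.
Qed.

Lemma norm_S_psi_sqr_le (A : {set F}) :
  `|S_psi psi A B C| ^+ 2 <= #|A|%:R * (#|F|%:R * (cross_energy B C)%:R).
Proof.
have -> : S_psi psi A B C = \sum_(a in A) inner_sum a by [].
apply: le_trans (_ : (\sum_(a in A) `|inner_sum a|) ^+ 2 <= _).
  by rewrite ler_pXn2r ?nnegrE ?sumr_ge0 // ler_norm_sum.
apply: le_trans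
  (_ : _ <= (\sum_(a in A) 1 ^+ 2) * \sum_(a in A) `|inner_sum a| ^+ 2) _.
  under eq_bigr do rewrite -[`|_|]mul1r.
  by apply: CauchySchwarz_sum => a; rewrite ?rpred1 ?normr_real.
under eq_bigr do rewrite expr1n; rewrite sumr_const ler_wpM2l //.
apply: le_trans sum_norm_inner_sum_sqr_le.
rewrite [leRHS](bigID [in A]) /= lerDl.
by apply: sumr_ge0 => a _; rewrite exprn_ge0.
Qed.

End CharacterSum.

Theorem lemma4p1 (F : finFieldType) (A B C : {set F}) (psi : F -> algC) :
  additive_character psi -> nontrivial_character psi ->
  `|S_psi psi A B C| <=
    sqrtC (#|A|%:R) * sqrtC (sqrtC ((energy B)%:R)) * sqrtC (sqrtC ((energy C)%:R))
    * sqrtC (#|F|%:R).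
Proof.
move=> psi_char psi_nontrivial.
have S_bound := norm_S_psi_sqr_le B C psi_char psi_nontrivial A.
have E_bound := cross_energy_sqr_le B C; rewrite -!energyE in E_bound.
have sqrtC_exp4 (x : algC) : sqrtC x ^+ 4 = x ^+ 2 by rewrite (exprM _ 2 2) sqrtCK.
rewrite -(@ler_pXn2r _ 4) ?nnegrE ?normr_ge0 ?mulr_ge0 ?sqrtC_ge0 ?ler0n //.
rewrite !exprMn !sqrtC_exp4 !sqrtCK (exprM _ 2 2).
apply: le_trans (_ : (#|A|%:R * (#|F|%:R * (cross_energy B C)%:R)) ^+ 2 <= _).
  by rewrite ler_pXn2r ?nnegrE ?exprn_ge0 ?mulr_ge0 ?S_bound.
rewrite -!natrM -!natrX -!natrM ler_nat; nia.
Qed.
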